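(* Let $L$ be an odd unimodular lattice in dimension $n\equiv 0\pmod 8$ which contains a $k$-frame. Then both even unimodular neighbors $L_0\cup L_1$ and $L_0\cup L_3$ of $L$ contain a $2k$-frame.
   Context: A lattice $L\subset\mathbb{R}^n$ is unimodular if $L=L^*$, where $L^*=\{x\in\mathbb{R}^n:(x,y)\in\mathbb{Z}\ \forall y\in L\}$; it is odd if it contains a vector of odd norm $(x,x)$. For an odd unimodular lattice $L$, let $L_0$ be the sublattice of vectors of even norm (index $2$ in $L$); then $L_0^*=L_0\cup L_1\cup L_2\cup L_3$ for cosets $L_1,L_2,L_3$ of $L_0$ with $L=L_0\cup L_2$. When $n\equiv 0\pmod 8$, $L_0\cup L_1$ and $L_0\cup L_3$ are even unimodular lattices, called the even unimodular neighbors of $L$. A $t$-frame of a lattice in dimension $n$ is a set of $n$ lattice vectors $f_1,\dots,f_n$ with $(f_i,f_j)=t\,\delta_{i,j}$. *)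

From HB Require Import structures.
From mathcomp Require Import all_boot all_order all_algebra.
From mathcomp Require Import reals.
Set Implicit Arguments. Unset Strict Implicit. Unset Printing Implicit Defensive.
Import Order.TTheory GRing.Theory Num.Theory.
Local Open Scope ring_scope.

Section Lattices.
Variables (R : realType) (n : nat).

Definition dotv (x y : 'rV[R]_n) : R := \sum_(i < n) x 0 i * y 0 i.

Definition is_integer (a : R) : Prop := exists z : int, a = z%:~R.

Definition is_lattice (L : 'rV[R]_n -> Prop) : Prop :=
  exists B : 'M[R]_n, B \in unitmx /\
    forall x, L x <-> exists z : 'rV[int]_n, x = map_mx intr z *m B.

Definition dual (L : 'rV[R]_n -> Prop) (x : 'rV[R]_n) : Prop :=
  forall y, L y -> is_integer (dotv x y).

Definition unimodular (L : 'rV[R]_n -> Prop) : Prop :=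
  is_lattice L /\ forall x, L x <-> dual L x.

Definition odd_norm (x : 'rV[R]_n) : Prop :=
  exists z : int, dotv x x = z%:~R /\ ~~ (2 %| z)%Z.

Definition even_norm (x : 'rV[R]_n) : Prop :=
  exists z : int, dotv x x = (2 * z)%:~R.

Definition odd_lattice (L : 'rV[R]_n -> Prop) : Prop :=
  exists x, L x /\ odd_norm x.

Definition even_part (L : 'rV[R]_n -> Prop) (x : 'rV[R]_n) : Prop :=
  L x /\ even_norm x.

(* the union L_0 u (v + L_0) of L_0 and the coset of L_0 containing v *)
Definition coset_union (L : 'rV[R]_n -> Prop) (v x : 'rV[R]_n) : Prop :=
  even_part L x \/ even_part L (x - v).

Definition has_frame (M : 'rV[R]_n -> Prop) (t : R) : Prop :=
  exists f : 'I_n -> 'rV[R]_n,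
    (forall i, M (f i)) /\
    (forall i j, dotv (f i) (f j) = if i == j then t else 0).

End Lattices.

From HB Require Import structures.
From mathcomp Require Import all_boot all_order all_algebra.
From mathcomp Require Import reals.
From mathcomp Require Import zify.
Set Implicit Arguments. Unset Strict Implicit. Unset Printing Implicit Defensive.
Import Order.TTheory GRing.Theory Num.Theory.
Local Open Scope ring_scope.

(* Pair the vectors of a k-frame as f_(2m) + f_(2m+1) and f_(2m) - f_(2m+1):
   these form a 2k-frame of L.  Their norm 2k is even because k = (f,f) is an
   integer in a unimodular lattice, so they all lie in the even sublattice L_0,
   which is contained in both even neighbors L_0 u L_1 and L_0 u L_3. *)

Section InnerProduct.
Variables (R : realType) (n : nat).
Implicit Types (x y z : 'rV[R]_n) (a : R).

Lemma dotvDl x y z : dotv (x + y) z = dotv x z + dotv y z.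
Proof. by rewrite /dotv -big_split; apply: eq_bigr => i _; rewrite mxE mulrDl. Qed.

Lemma dotvDr x y z : dotv z (x + y) = dotv z x + dotv z y.
Proof. by rewrite /dotv -big_split; apply: eq_bigr => i _; rewrite mxE mulrDr. Qed.

Lemma dotvZl a x y : dotv (a *: x) y = a * dotv x y.
Proof. by rewrite /dotv mulr_sumr; apply: eq_bigr => i _; rewrite mxE mulrA. Qed.

Lemma dotvZr a x y : dotv x (a *: y) = a * dotv x y.
Proof. by rewrite /dotv mulr_sumr; apply: eq_bigr => i _; rewrite mxE mulrCA. Qed.

End InnerProduct.

Section LatticeClosure.
Variables (R : realType) (n : nat) (L : 'rV[R]_n -> Prop).
Hypothesis latL : is_lattice L.

Lemma lattice_add x y : L x -> L y -> L (x + y).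
Proof.
have [B [_ HB]] := latL.
move=> /HB [z ->] /HB [w ->]; apply/HB; exists (z + w).
by rewrite map_mxD mulmxDl.
Qed.

Lemma lattice_opp x : L x -> L (- x).
Proof.
have [B [_ HB]] := latL.
by move=> /HB [z ->]; apply/HB; exists (- z); rewrite map_mxN mulNmx.
Qed.

Lemma lattice_sign (b : bool) x : L x -> L ((-1) ^+ b *: x).
Proof.
by case: b => Lx; rewrite ?expr1 ?scaleN1r ?expr0 ?scale1r //; exact: lattice_opp.
Qed.

End LatticeClosure.

Lemma unimodular_norm_integer (R : realType) (n : nat) (L : 'rV[R]_n -> Prop) x :
  unimodular L -> L x -> is_integer (dotv x x).
Proof. by move=> [_ uniL] Lx; exact: (proj1 (uniL x) Lx x Lx). Qed.

Lemma has_frame_sub (R : realType) (n : nat) (M M' : 'rV[R]_n -> Prop) t :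
  (forall x, M x -> M' x) -> has_frame M t -> has_frame M' t.
Proof. by move=> MM' [f [Mf fD]]; exists f; split=> // i; apply: MM'. Qed.

Section FramePairing.
Variables (R : realType) (n : nat).
Hypothesis n_even : ~~ odd n.

Let n_mod2 : (n %% 2 = 0)%N.
Proof. by rewrite modn2; case: (odd n) n_even. Qed.

Lemma pair_lo_subproof (i : 'I_n) : ((i %/ 2) * 2 < n)%N.
Proof. have := ltn_ord i; have := n_mod2; lia. Qed.

Lemma pair_hi_subproof (i : 'I_n) : ((i %/ 2) * 2 + 1 < n)%N.
Proof. have := ltn_ord i; have := n_mod2; lia. Qed.

Definition pair_lo (i : 'I_n) : 'I_n := Ordinal (pair_lo_subproof i).
Definition pair_hi (i : 'I_n) : 'I_n := Ordinal (pair_hi_subproof i).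

Lemma pair_lo_hi_neq i j : (pair_lo i == pair_hi j) = false.
Proof. by apply/eqP => /(congr1 val) /=; lia. Qed.

Lemma pair_hi_eq i j : (pair_hi i == pair_hi j) = (pair_lo i == pair_lo j).
Proof. by apply/eqP/eqP => /(congr1 val) /= h; apply: val_inj => /=; lia. Qed.

Lemma pair_lo_eq_odd i j :
  pair_lo i = pair_lo j -> i != j -> odd i != odd j.
Proof.
move=> /(congr1 val) /= eij; apply: contra => /eqP oij; apply/eqP/val_inj.
have := modn2 i; have := modn2 j; move: oij eij; rewrite /=; lia.
Qed.

(* f_(2m) + f_(2m+1) sits at index 2m and f_(2m) - f_(2m+1) at index 2m+1. *)
Definition paired_frame (f : 'I_n -> 'rV[R]_n) (i : 'I_n) : 'rV[R]_n :=
  f (pair_lo i) + (-1) ^+ odd i *: f (pair_hi i).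

Lemma paired_frame_dot (f : 'I_n -> 'rV[R]_n) t :
  (forall i j, dotv (f i) (f j) = if i == j then t else 0) ->
  forall i j, dotv (paired_frame f i) (paired_frame f j)
              = if i == j then 2 * t else 0.
Proof.
move=> fD i j; rewrite dotvDl !dotvDr !dotvZl !dotvZr !fD.
rewrite pair_lo_hi_neq [pair_hi i == _]eq_sym pair_lo_hi_neq pair_hi_eq.
rewrite !mulr0 add0r addr0.
have [<- | nij] := eqVneq i j.
  by rewrite !eqxx mulrA -signr_addb addbb expr0 mul1r mulr2n mulrDl !mul1r.
case: eqVneq => [eqlo | _]; last by rewrite !mulr0 addr0.
have := pair_lo_eq_odd eqlo nij.
by case: (odd i) (odd j) => [] [] //= _; rewrite expr1 expr0 !mul1r mulN1r addrN.
Qed.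

End FramePairing.

Lemma unimodular_even_part_frame (R : realType) (n : nat)
    (L : 'rV[R]_n -> Prop) (k : R) :
  ~~ odd n -> unimodular L -> has_frame L k -> has_frame (even_part L) (2 * k).
Proof.
move=> n_even uniL [f [Lf fD]]; have latL := proj1 uniL.
exists (paired_frame n_even f); split; last exact: paired_frame_dot.
move=> i; split; first by apply: lattice_add => //; apply: lattice_sign.
have [z kz] := unimodular_norm_integer uniL (Lf (pair_lo n_even i)).
rewrite fD eqxx in kz.
by exists z; rewrite (paired_frame_dot _ fD) eqxx kz intrM.
Qed.

(* Neither the oddness of L nor the choice of the neighbor matters: the
   2k-frame already lies in L_0. *)
Theorem lemma3p2 (R : realType) (n : nat) (L : 'rV[R]_n -> Prop) (k : R) :
  (n %% 8 = 0)%N ->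
  unimodular L -> odd_lattice L ->
  has_frame L k ->
  forall v : 'rV[R]_n, dual (even_part L) v -> ~ L v ->
    has_frame (coset_union L v) (2 * k).
Proof.
move=> n8 uniL _ frameL v _ _.
have n_even : ~~ odd n.
  have /dvdnP[m ->] : (8 %| n)%N by apply/eqP.
  by rewrite oddM andbF.
apply: has_frame_sub (unimodular_even_part_frame n_even uniL frameL).
by move=> x; left.
Qed.
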